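(* Let $n\geq 4$, let $S$ be the set of all $3$-cycles in $S_n$, and let $CAG_n=\mathrm{Cay}(A_n,S)$. Then $$\mathrm{Aut}(CAG_n)\supseteq (R(A_n)\rtimes \mathrm{Inn}(S_n))\rtimes \mathbb{Z}_2\cong (A_n\rtimes S_n)\rtimes \mathbb{Z}_2,$$ where $R(A_n)$ is the right regular representation of $A_n$, $\mathrm{Inn}(S_n)$ is the inner automorphism group of $S_n$ (acting on $A_n$ by conjugation), and $\mathbb{Z}_2=\langle h\rangle$ with $h$ the map $\alpha\mapsto\alpha^{-1}$ for all $\alpha\in A_n$.
   Context: For a finite group $\Gamma$ and a subset $T\subseteq\Gamma$ with $e\notin T$ and $T=T^{-1}$, the Cayley graph $\mathrm{Cay}(\Gamma,T)$ is the undirected graph with vertex set $\Gamma$ and edge set $\{\{\gamma,t\gamma\}\mid \gamma\in\Gamma, t\in T\}$. The right regular representation is $R(\Gamma)=\{r_\gamma: x\mapsto x\gamma\mid\gamma\in\Gamma\}$. *)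

From mathcomp Require Import all_boot all_fingroup all_solvable.
Set Implicit Arguments.
Unset Strict Implicit.
Unset Printing Implicit Defensive.
Local Open Scope group_scope.

Section CAG.
Variable n : nat.

Definition is_3cycle (s : {perm 'I_n}) : bool :=
  [exists a, exists b, exists c,
    [&& a != b, b != c, a != c, s a == b, s b == c, s c == a &
        [forall x, (x \notin [:: a; b; c]) ==> (s x == x)]]].

Definition three_cycles : {set {perm 'I_n}} := [set s | is_3cycle s].

Definition An : finGroupType := subg_of (Alt_group 'I_n).

(* Cay(A_n, S): x ~ y iff y = t x for some t in S, i.e. y x^-1 in S. *)
Definition cag_adj (x y : An) : bool :=
  (sgval y * (sgval x)^-1) \in three_cycles.

Definition cag_aut : {set {perm An}} :=
  [set f : {perm An} | [forall x, forall y, cag_adj x y == cag_adj (f x) (f y)]].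

Definition rreg (g : An) : {perm An} := perm (mulIg g).
Definition Rreg : {set {perm An}} := [set rreg g | g : An].

Definition conjA_fun (s : {perm 'I_n}) (x : An) : An := subg (Alt_group 'I_n) (sgval x ^ s).

Lemma conjA_in (s : {perm 'I_n}) (x : An) : sgval x ^ s \in Alt 'I_n.
Proof.
have := subgP x; rewrite !Alt_even odd_permJ; done.
Qed.

Lemma conjA_inj (s : {perm 'I_n}) : injective (conjA_fun s).
Proof.
move=> x y /(congr1 sgval); rewrite /conjA_fun !subgK ?conjA_in //.
by move/conjg_inj/subg_inj.
Qed.

Definition conjA (s : {perm 'I_n}) : {perm An} := perm (@conjA_inj s).
Definition Inn_on_An : {set {perm An}} := [set conjA s | s : {perm 'I_n}].

Definition hinv : {perm An} := perm (@invg_inj An).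

End CAG.

(* The 3-cycles form a union of S_n-conjugacy classes closed under inversion,
   so right translations, conjugations by S_n and inversion all preserve
   adjacency in Cay(A_n, S).  Conjugations normalise the right regular
   representation and meet it trivially because they fix the identity;
   inversion normalises their product because conjugating x |-> (x g)^s by it
   gives x |-> (x g^-1)^(g s).  For n >= 4 conjugation is faithful, since a
   permutation commuting with every 3-cycle fixes every point, and inversion
   is not of the form x |-> (x g)^s: it would fix 1, hence be a conjugation,
   hence an automorphism, and A_n is not abelian. *)
From mathcomp Require Import all_boot all_fingroup all_solvable.
Set Implicit Arguments.
Unset Strict Implicit.
Unset Printing Implicit Defensive.
Local Open Scope group_scope.

Section CayleyAlternating.
Variable n : nat.
Local Notation An := (An n).
Local Notation S := (three_cycles n).

Lemma three_cycleJ (t s : {perm 'I_n}) : t \in S -> t ^ s \in S.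
Proof.
rewrite !inE => /existsP[a /existsP[b /existsP[c]]].
case/and5P=> ab bc ac /eqP ta /and3P[/eqP tb /eqP tc /forallP fixt].
apply/existsP; exists (s a); apply/existsP; exists (s b); apply/existsP; exists (s c).
rewrite !permJ !(inj_eq perm_inj) ab bc ac ta tb tc !eqxx /=.
apply/forallP => x; apply/implyP => xout.
have : s^-1 x \notin [:: a; b; c] by rewrite -(mem_map (@perm_inj _ s)) /= !permKV.
by move/(implyP (fixt _))/eqP => fixx; rewrite -{1}(permKV s x) permJ fixx permKV.
Qed.

Lemma three_cycleJ_eq (t s : {perm 'I_n}) : (t ^ s \in S) = (t \in S).
Proof.
apply/idP/idP; last exact: three_cycleJ.
by move/(three_cycleJ (s^-1)); rewrite conjgK.
Qed.

Lemma three_cycleV (t : {perm 'I_n}) : t \in S -> t^-1 \in S.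
Proof.
rewrite !inE => /existsP[a /existsP[b /existsP[c]]].
case/and5P=> ab bc ac /eqP ta /and3P[/eqP tb /eqP tc /forallP fixt].
apply/existsP; exists a; apply/existsP; exists c; apply/existsP; exists b.
have tVa : t^-1 a = c by rewrite -tc permK.
have tVc : t^-1 c = b by rewrite -tb permK.
have tVb : t^-1 b = a by rewrite -ta permK.
rewrite ac (eq_sym c) bc ab tVa tVb tVc !eqxx /=.
apply/forallP => x; apply/implyP => xacb.
have xabc : x \notin [:: a; b; c].
  by move: xacb; rewrite !inE; apply: contra; case/or3P=> ->; rewrite ?orbT.
by move/(implyP (fixt x))/eqP: xabc => {1}<-; rewrite permK.
Qed.

Lemma three_cycleV_eq (t : {perm 'I_n}) : (t^-1 \in S) = (t \in S).
Proof. by apply/idP/idP => /three_cycleV //; rewrite invgK. Qed.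

Lemma rregE (g x : An) : rreg g x = x * g.
Proof. by rewrite permE. Qed.

Lemma conjAE (s : {perm 'I_n}) (x : An) : sgval (conjA s x) = sgval x ^ s.
Proof. by rewrite permE /conjA_fun subgK // conjA_in. Qed.

Lemma hinvE (x : An) : hinv n x = x^-1.
Proof. by rewrite permE. Qed.

Lemma hinvV : (hinv n)^-1 = hinv n.
Proof. by apply/permP => x; apply: (canLR (permK _)); rewrite !hinvE invgK. Qed.

Lemma rregM : {in [set: An] &, {morph @rreg n : g h / g * h}}.
Proof. by move=> g h _ _; apply/permP => x; rewrite permM !rregE mulgA. Qed.
Canonical rreg_morphism := Morphism rregM.

Lemma conjAM : {in [set: {perm 'I_n}] &, {morph @conjA n : s t / s * t}}.
Proof.
by move=> s t _ _; apply/permP => x; apply/subg_inj; rewrite permM !conjAE conjgM.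
Qed.
Canonical conjA_morphism := Morphism conjAM.

Lemma Rreg_morphim : Rreg n = rreg_morphism @* setT.
Proof.
by rewrite morphimEdom; apply/setP => f; apply/imsetP/imsetP => -[x _ ->]; exists x.
Qed.

Lemma Inn_morphim : Inn_on_An n = conjA_morphism @* setT.
Proof.
by rewrite morphimEdom; apply/setP => f; apply/imsetP/imsetP => -[x _ ->]; exists x.
Qed.

Lemma group_set_Rreg : group_set (Rreg n).
Proof. by rewrite Rreg_morphim groupP. Qed.
Canonical Rreg_group := group group_set_Rreg.

Lemma group_set_Inn : group_set (Inn_on_An n).
Proof. by rewrite Inn_morphim groupP. Qed.
Canonical Inn_group := group group_set_Inn.

Lemma injm_rreg : 'injm rreg_morphism.
Proof.
by apply/injmP => g h _ _ /(congr1 (fun f : {perm An} => f 1)); rewrite !rregE !mul1g.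
Qed.

Lemma Rreg_isog_Alt : Rreg n \isog 'Alt_('I_n).
Proof.
rewrite isog_sym /= Rreg_morphim; apply: isog_trans (isog_subg _) _.
exact: sub_isog (subxx _) injm_rreg.
Qed.

Lemma group_set_cag_aut : group_set (cag_aut n).
Proof.
apply/group_setP; split.
  by rewrite inE; apply/forallP=> x; apply/forallP=> y; rewrite !perm1.
move=> f g; rewrite !inE => /forallP autf /forallP autg.
apply/forallP=> x; apply/forallP=> y; rewrite !permM.
by rewrite (eqP (forallP (autf x) y)) (eqP (forallP (autg (f x)) (f y))).
Qed.
Canonical cag_aut_group := group group_set_cag_aut.

Lemma rreg_cag_aut (g : An) : rreg g \in cag_aut n.
Proof.
rewrite inE; apply/forallP=> x; apply/forallP=> y.
by rewrite /cag_adj !rregE /= invMg mulgA mulgK.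
Qed.

Lemma conjA_cag_aut (s : {perm 'I_n}) : conjA s \in cag_aut n.
Proof.
rewrite inE; apply/forallP=> x; apply/forallP=> y.
by rewrite /cag_adj !conjAE -conjVg -conjMg three_cycleJ_eq.
Qed.

Lemma hinv_cag_aut : hinv n \in cag_aut n.
Proof.
rewrite inE; apply/forallP=> x; apply/forallP=> y.
rewrite /cag_adj !hinvE /=; set X := sgval x; set Y := sgval y.
have -> : Y^-1 * X^-1^-1 = ((Y * X^-1) ^ Y)^-1.
  by rewrite conjgE !mulgA mulVg mul1g invMg !invgK.
by rewrite three_cycleV_eq three_cycleJ_eq.
Qed.

Lemma Rreg_Inn_hinv_cag_aut :
  Rreg n <*> Inn_on_An n <*> <[hinv n]> \subset cag_aut n.
Proof.
rewrite gen_subG subUset gen_subG subUset cycle_subG hinv_cag_aut andbT.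
by apply/andP; split; apply/subsetP => _ /imsetP[x _ ->];
  [exact: rreg_cag_aut | exact: conjA_cag_aut].
Qed.

Lemma Inn_norm_Rreg : Inn_on_An n \subset 'N(Rreg n).
Proof.
apply/subsetP => _ /imsetP[s _ ->]; rewrite inE.
apply/subsetP => _ /imsetP[_ /imsetP[g _ ->] ->].
suff -> : rreg g ^ conjA s = rreg (conjA s g) by apply: imset_f.
apply/permP => x; rewrite -(permKV (conjA s) x) permJ !rregE.
by apply/subg_inj; rewrite /= !conjAE conjMg.
Qed.

Lemma Rreg_Inn_TI : Rreg n :&: Inn_on_An n = 1.
Proof.
apply/trivgP/subsetP => _ /setIP[/imsetP[g _ ->] /imsetP[s _ rg_s]].
have /(congr1 sgval) := congr1 (fun f : {perm An} => f 1) rg_s.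
rewrite rregE mul1g conjAE conj1g => g1.
by rewrite (_ : g = 1) ?morph1 ?inE //; apply: subg_inj.
Qed.

Lemma Rreg_Inn_mulg : Rreg n <*> Inn_on_An n = Rreg n * Inn_on_An n.
Proof. exact: norm_joinEr Inn_norm_Rreg. Qed.

Lemma rreg_conjA_hinv (g : An) (s : {perm 'I_n}) :
  (rreg g * conjA s) ^ hinv n = rreg g^-1 * conjA (sgval g * s).
Proof.
apply/permP => x; rewrite conjgE hinvV !permM !hinvE !rregE.
apply/subg_inj; rewrite /= !conjAE /= conjgM -conjVg invMg invgK.
by congr (_ ^ _); rewrite conjgE !mulgA mulgKV.
Qed.

Lemma hinv_norm_Rreg_Inn : hinv n \in 'N(Rreg n <*> Inn_on_An n).
Proof.
rewrite Rreg_Inn_mulg inE.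
apply/subsetP => _ /imsetP[_ /mulsgP[r c Rr Cc ->] ->].
case/imsetP: Rr => g _ ->; case/imsetP: Cc => s _ ->.
by rewrite rreg_conjA_hinv mem_mulg ?imset_f.
Qed.

Definition c3 (a b c : 'I_n) : {perm 'I_n} := tperm a b * tperm a c.

Lemma c3_Alt (a b c : 'I_n) : a != b -> a != c -> c3 a b c \in Alt 'I_n.
Proof. by move=> ab ac; rewrite Alt_even odd_permM !odd_tperm ab ac. Qed.

Lemma c3_first (a b c : 'I_n) : a != b -> b != c -> c3 a b c a = b.
Proof. by move=> ab bc; rewrite permM tpermL tpermD // eq_sym. Qed.

Lemma c3_second (a b c : 'I_n) : a != b -> c3 a b c b = c.
Proof. by move=> ab; rewrite permM tpermR tpermL. Qed.

Lemma c3_out (a b c x : 'I_n) : x \notin [:: a; b; c] -> c3 a b c x = x.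
Proof. by rewrite !inE => /norP[xa /norP[xb xc]]; rewrite permM !tpermD // eq_sym. Qed.

Lemma commute_c3_supp (u : {perm 'I_n}) (a b c : 'I_n) :
  uniq [:: a; b; c] -> commute (c3 a b c) u -> u a \in [:: a; b; c].
Proof.
rewrite /= => /and3P[]; rewrite !inE => /norP[ab ac] bc _ cu.
apply: contraT => uabc; have := congr1 (fun f : {perm 'I_n} => f a) cu.
rewrite /= (permM (c3 a b c)) (permM u) c3_first // c3_out ?inE //.
by move=> /esym/perm_inj/eqP; rewrite (negbTE ab).
Qed.

(* [p] is the only point common to the supports of (p q r), (p q w), (p r w). *)
Lemma commute_c3_fix (u : {perm 'I_n}) (p q r w : 'I_n) :
  uniq [:: p; q; r; w] ->
  (forall a b c, uniq [:: a; b; c] -> commute (c3 a b c) u) -> u p = p.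
Proof.
rewrite /= !inE => /and4P[/norP[pq /norP[pr pw]] /norP[qr qw] rw _] cu.
have supp a b c : a != b -> a != c -> b != c -> u a \in [:: a; b; c].
  move=> ab ac bc; have abc : uniq [:: a; b; c] by rewrite /= !inE negb_or ab ac bc.
  exact: commute_c3_supp abc (cu _ _ _ abc).
move: (supp p q r pq pr qr) (supp p q w pq pw qw) (supp p r w pr pw rw).
rewrite !inE; case/or3P=> /eqP -> //.
  by rewrite (eq_sym q) (negbTE pq) (negbTE qr) (negbTE qw).
by rewrite (eq_sym r) (negbTE pr) (eq_sym r q) (negbTE qr) (negbTE rw).
Qed.

Hypothesis n_ge4 : 4 <= n.

Lemma three_others (p : 'I_n) : exists q r w : 'I_n, uniq [:: p; q; r; w].
Proof.
pose o i (i_lt4 : (i < 4)%N) := Ordinal (leq_trans i_lt4 n_ge4).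
pose o0 := o 0%N isT; pose o1 := o 1%N isT; pose o2 := o 2%N isT; pose o3 := o 3%N isT.
case: (boolP (p \in [:: o0; o1; o2])) => [|p_out].
  rewrite !inE => /or3P[] /eqP ->;
  by [exists o1, o2, o3 | exists o0, o2, o3 | exists o0, o1, o3].
by exists o0, o1, o2; rewrite /= p_out.
Qed.

Lemma An_not_abelian : exists x y : An, x * y != y * x.
Proof.
have [q [r [w]]] := three_others (Ordinal (leq_trans (isT : (0 < 4)%N) n_ge4)).
set p := Ordinal _; rewrite /= !inE => /and4P[/norP[pq /norP[pr pw]] /norP[qr qw] rw _].
exists (subg (Alt_group 'I_n) (c3 p q r)), (subg (Alt_group 'I_n) (c3 p q w)).
apply/eqP => /(congr1 (fun x : An => sgval x p)) /=.
rewrite !subgK ?c3_Alt // (permM (c3 p q r)) (permM (c3 p q w)).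
by rewrite !c3_first // !c3_second // => wr; rewrite wr eqxx in rw.
Qed.

Lemma injm_conjA : 'injm conjA_morphism.
Proof.
apply/subsetP => u /mker cu1; rewrite inE.
have cu a b c : uniq [:: a; b; c] -> commute (c3 a b c) u.
  rewrite /= !inE => /and3P[/norP[ab ac] _ _]; apply/commgP/conjg_fixP.
  pose x : An := subg (Alt_group 'I_n) (c3 a b c).
  have := congr1 (fun f : {perm An} => sgval (f x)) cu1.
  by rewrite conjAE perm1 subgK // c3_Alt.
apply/eqP/permP => p; rewrite perm1.
by have [q [r [w pqrw]]] := three_others p; exact: commute_c3_fix pqrw cu.
Qed.

Lemma Inn_isog_Sym : Inn_on_An n \isog 'Sym_('I_n).
Proof. by rewrite isog_sym /= Inn_morphim; exact: sub_isog (subxx _) injm_conjA. Qed.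

Lemma hinv_notin_Rreg_Inn : hinv n \notin Rreg n <*> Inn_on_An n.
Proof.
rewrite Rreg_Inn_mulg; apply/negP => /mulsgP[_ _ /imsetP[g _ ->] /imsetP[s _ ->]].
move=> hinv_gs; have inv_conj (x : An) : sgval x^-1 = sgval (x * g) ^ s.
  by rewrite -hinvE hinv_gs permM rregE conjAE.
have g1 : g = 1.
  have := inv_conj 1; rewrite invg1 mul1g /= -(conj1g s) => /esym /conjg_inj.
  by move=> sg1; apply: subg_inj.
have {}inv_conj (x : An) : (sgval x)^-1 = sgval x ^ s.
  by rewrite -[LHS]/(sgval x^-1) inv_conj g1 mulg1.
have [x [y /eqP[]]] := An_not_abelian; apply/subg_inj/invg_inj.
by rewrite [RHS]inv_conj /= conjMg invMg -!inv_conj.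
Qed.

Lemma order_hinv : #[hinv n] = 2.
Proof.
have hinv_neq1 : hinv n != 1.
  by apply: contraNneq hinv_notin_Rreg_Inn => ->; exact: group1.
apply/eqP; rewrite eqn_leq order_gt1 hinv_neq1 andbT dvdn_leq // order_dvdn.
by rewrite expgS expg1 -{1}hinvV mulVg.
Qed.

Lemma Rreg_Inn_TI_hinv : Rreg n <*> Inn_on_An n :&: <[hinv n]> = 1.
Proof.
rewrite setIC prime_TIg -?orderE ?order_hinv // cycle_subG.
exact: hinv_notin_Rreg_Inn.
Qed.

End CayleyAlternating.

Theorem theorem2p2 (n : nat) (hn : 4 <= n) :
  let R := Rreg n in
  let C := Inn_on_An n in
  let K := <<R :|: C>> in
  let H := <<K :|: <[hinv n]> >> in
  H \subset cag_aut n /\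
  [/\ R ><| C = K,
      K ><| <[hinv n]> = H,
      R \isog 'Alt_('I_n),
      C \isog 'Sym_('I_n) &
      #[hinv n] = 2].
Proof.
move=> R C K H; split; first exact: Rreg_Inn_hinv_cag_aut.
split; [| | exact: Rreg_isog_Alt | exact: Inn_isog_Sym hn | exact: order_hinv hn].
  exact: sdprodEY (Inn_norm_Rreg n) (Rreg_Inn_TI n).
apply: sdprodEY; last exact: Rreg_Inn_TI_hinv hn.
by rewrite cycle_subG; exact: hinv_norm_Rreg_Inn.
Qed.
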